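(* Let $\mathcal{M}\subset\mathbb{R}^n$ be a locally symmetric $C^2$ submanifold, $\sigma\in\Sigma^n$ and $\bar x\in\mathcal{M}\cap\Delta(\sigma)$. Then $\mathrm{Proj}_{\Delta(\sigma)^{\perp\perp}}(T_{\mathcal{M}}(\bar x))=T_{\mathcal{M}}(\bar x)\cap\Delta(\sigma)^{\perp\perp}$, and consequently $$T_{\mathcal{M}}(\bar x)=(T_{\mathcal{M}}(\bar x)\cap\Delta(\sigma)^{\perp\perp})\oplus(T_{\mathcal{M}}(\bar x)\cap\Delta(\sigma)^{\perp}),\qquad N_{\mathcal{M}}(\bar x)=(N_{\mathcal{M}}(\bar x)\cap\Delta(\sigma)^{\perp\perp})\oplus(N_{\mathcal{M}}(\bar x)\cap\Delta(\sigma)^{\perp}).$$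
   Context: $\Sigma^n$ permutations of $\mathbb{N}_n$ acting by $(\sigma x)_i=x_{\sigma^{-1}(i)}$; $P(\sigma)$ partition into orbits of $\sigma$; $P(x)$ partition by equal coordinates; $\Delta(\sigma)=\{x:P(x)=P(\sigma)\}$; $\Delta(\sigma)^{\perp\perp}=\{x:x_i=x_j$ whenever $i,j$ lie in the same set of $P(\sigma)\}$ and $\Delta(\sigma)^{\perp}=\{x:\sum_{j\in I}x_j=0$ for every $I\in P(\sigma)\}$ (its orthogonal complement). $\mathbb{R}^n_\ge=\{x:x_1\ge\cdots\ge x_n\}$; $B$ open ball. A set $S$ is locally symmetric if $S\cap\mathbb{R}^n_\ge\ne\emptyset$ and each $x\in S$ has $\delta>0$ with $\sigma(S\cap B(x,\delta))=S\cap B(x,\delta)$ for all $y\in S\cap B(x,\delta)$, all $\sigma$ with $\sigma y=y$; a locally symmetric $C^2$ submanifold is a connected $C^2$ submanifold without boundary that is locally symmetric. $T_{\mathcal{M}}(\bar x)$, $N_{\mathcal{M}}(\bar x)$ are the tangent and normal spaces. *)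

From HB Require Import structures.
From mathcomp Require Import all_boot all_order all_algebra all_fingroup.
From mathcomp Require Import all_classical all_reals all_analysis.
Set Implicit Arguments. Unset Strict Implicit. Unset Printing Implicit Defensive.
Import Order.TTheory GRing.Theory Num.Theory.
Import numFieldNormedType.Exports.
Local Open Scope classical_set_scope.
Local Open Scope ring_scope.

Section Defs.
Variables (R : realType) (n : nat).
Notation vec := 'rV[R]_n.

Definition dotv (x y : vec) : R := \sum_(i < n) x ord0 i * y ord0 i.

Definition permv (s : 'S_n) (x : vec) : vec := \row_i x ord0 ((s^-1)%g i).

(* i and j lie in the same set of the partition P(sigma) into orbits *)
Definition same_orbit (s : 'S_n) (i j : 'I_n) : bool := j \in porbit s i.

(* Delta(sigma) = {x : P(x) = P(sigma)} *)
Definition Delta (s : 'S_n) : set vec :=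
  [set x | forall i j, (x ord0 i == x ord0 j) = same_orbit s i j].

Definition Delta_pp (s : 'S_n) : set vec :=
  [set x | forall i j, same_orbit s i j -> x ord0 i = x ord0 j].

Definition Delta_p (s : 'S_n) : set vec :=
  [set x | forall i, \sum_(j | same_orbit s i j) x ord0 j = 0].

Definition orthc (A : set vec) : set vec :=
  [set w | forall v, A v -> dotv w v = 0].

Definition is_proj (L : set vec) (v w : vec) : Prop :=
  L w /\ forall u, L u -> dotv (v - w) u = 0.

Definition proj_set (L : set vec) (A : set vec) : set vec :=
  [set w | exists2 v, A v & is_proj L v w].

Definition direct_sum (V A B : set vec) : Prop :=
  (forall v, V v <-> exists a b, [/\ A a, B b & v = a + b]) /\
  (forall v, A v -> B v -> v = 0).

Definition Rge_cone : set vec :=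
  [set x | forall i j : 'I_n, (i <= j)%N -> x ord0 j <= x ord0 i].

Definition eball (x : vec) (d : R) : set vec :=
  [set y | dotv (y - x) (y - x) < d ^+ 2].

Definition locally_symmetric (S : set vec) : Prop :=
  (S `&` Rge_cone !=set0) /\
  forall x, S x -> exists2 d : R, 0 < d &
    forall y s, (S `&` eball x d) y -> permv s y = y ->
      permv s @` (S `&` eball x d) = S `&` eball x d.

Definition C2_on (k : nat) (U : set vec) (F : vec -> 'rV[R]_k) : Prop :=
  open U /\
  (forall x, U x -> differentiable F x) /\
  (forall v x, U x -> differentiable ('D_v F) x) /\
  (forall v w x, U x -> {for x, continuous ('D_w ('D_v F))}).

Definition local_defining_map (M : set vec) (x : vec) (k : nat)
    (U : set vec) (F : vec -> 'rV[R]_k) : Prop :=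
  [/\ U x, C2_on U F,
      (forall w, exists v, 'd F x v = w) &
      M `&` U = [set y | U y /\ F y = 0]].

Definition C2_submanifold (M : set vec) : Prop :=
  forall x, M x -> exists k (U : set vec) (F : vec -> 'rV[R]_k),
    local_defining_map M x U F.

Definition locally_symmetric_C2_submanifold (M : set vec) : Prop :=
  [/\ connected M, C2_submanifold M & locally_symmetric M].

Definition tangent_of (k : nat) (F : vec -> 'rV[R]_k) (x : vec) : set vec :=
  [set v | 'd F x v = 0].

End Defs.

From HB Require Import structures.
From mathcomp Require Import all_boot all_order all_algebra all_fingroup.
From mathcomp Require Import all_classical all_reals all_analysis.
From mathcomp Require Import ring lra.
Import Order.TTheory GRing.Theory Num.Theory.
Import numFieldNormedType.Exports.
Local Open Scope classical_set_scope.
Local Open Scope ring_scope.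
Set Implicit Arguments. Unset Strict Implicit. Unset Printing Implicit Defensive.

(* Local symmetry makes [M] invariant, near [xbar], under every permutation fixing [xbar];
   since [T] is the kernel of the differential of a submersion cutting out [M], a
   quantitative Newton step shows that [T] inherits this invariance.  Averaging over the
   powers of [s], all of which fix [xbar], is exactly the orthogonal projection onto
   [Delta_pp s] (the mean over each orbit); so it maps [T], and hence [N = T^perp],
   into itself, and both split along [Delta_pp s (+) Delta_p s]. *)

(** * Orbit means *)

Section InnerProduct.
Variables (R : realType) (n : nat).
Notation vec := 'rV[R]_n.

Lemma dotvDl (a b u : vec) : dotv (a + b) u = dotv a u + dotv b u.
Proof. by rewrite /dotv -big_split; apply: eq_bigr => i _; rewrite !mxE mulrDl. Qed.

Lemma dotvBl (a b u : vec) : dotv (a - b) u = dotv a u - dotv b u.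
Proof. by rewrite /dotv -sumrB; apply: eq_bigr => i _; rewrite !mxE mulrBl. Qed.

Lemma dotv0r (a : vec) : dotv a 0 = 0.
Proof. by rewrite /dotv big1 // => i _; rewrite mxE mulr0. Qed.

Lemma dotvv_eq0 (z : vec) : dotv z z = 0 -> z = 0.
Proof.
move=> /eqP; rewrite psumr_eq0 => [/allP z0|i _]; last exact: sqr_ge0.
apply/rowP => i; rewrite mxE.
by have /implyP/(_ isT) := z0 i (mem_index_enum _); rewrite mulf_eq0 orbb => /eqP.
Qed.

End InnerProduct.

Section OrbitMean.
Variables (R : realType) (n : nat) (s : 'S_n).
Notation vec := 'rV[R]_n.

Lemma porbit_mem_eq (i j : 'I_n) : j \in porbit s i -> porbit s j = porbit s i.
Proof. by move=> h; apply/eqP; rewrite eq_porbit_mem. Qed.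

Lemma card_porbitR_neq0 (i : 'I_n) : #|porbit s i|%:R != 0 :> R.
Proof. by rewrite pnatr_eq0 card_porbit_neq0. Qed.

Lemma sum_porbit_Delta_pp (u : vec) i : Delta_pp s u ->
  \sum_(j in porbit s i) u ord0 j = #|porbit s i|%:R * u ord0 i.
Proof.
move=> uD; rewrite (eq_bigr (fun _ => u ord0 i)) ?sumr_const ?mulr_natl //.
by move=> j ij; rewrite (uD i j).
Qed.

(* The orthogonal projection onto [Delta_pp s]. *)
Definition orbit_mean (v : vec) : vec :=
  \row_i (#|porbit s i|%:R^-1 * \sum_(j in porbit s i) v ord0 j).

Lemma orbit_mean_Delta_pp v : Delta_pp s (orbit_mean v).
Proof. by move=> i j ij; rewrite !mxE (porbit_mem_eq ij). Qed.

Lemma orbit_mean_id u : Delta_pp s u -> orbit_mean u = u.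
Proof.
by move=> uD; apply/rowP => i; rewrite mxE sum_porbit_Delta_pp // mulKf ?card_porbitR_neq0.
Qed.

Lemma dotv_orbit_mean w u : dotv (orbit_mean w) u = dotv w (orbit_mean u).
Proof.
pose c i j : R := if j \in porbit s i then #|porbit s i|%:R^-1 else 0.
have mean_c v i : orbit_mean v ord0 i = \sum_j c i j * v ord0 j.
  rewrite mxE mulr_sumr big_mkcond; apply: eq_bigr => j _ /=.
  by rewrite /c; case: ifP; rewrite ?mul0r.
have c_sym i j : c i j = c j i.
  rewrite /c porbit_sym; case: ifP => // ji.
  by rewrite (porbit_mem_eq ji).
rewrite /dotv; under eq_bigr do rewrite mean_c mulr_suml.
rewrite exchange_big; apply: eq_bigr => j _.
by rewrite mean_c mulr_sumr; apply: eq_bigr => i _; rewrite c_sym; ring.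
Qed.

Lemma orbit_mean_orth v u : Delta_pp s u -> dotv (v - orbit_mean v) u = 0.
Proof. by move=> uD; rewrite dotvBl dotv_orbit_mean orbit_mean_id // subrr. Qed.

Lemma sub_orbit_mean_Delta_p v : Delta_p s (v - orbit_mean v).
Proof.
move=> i; rewrite /same_orbit.
under eq_bigr => j ij do rewrite !mxE (porbit_mem_eq ij).
by rewrite sumrB sumr_const -mulrnAl -mulr_natr mulVf ?card_porbitR_neq0 ?mul1r ?subrr.
Qed.

Lemma Delta_pp_p_eq0 (v : vec) : Delta_pp s v -> Delta_p s v -> v = 0.
Proof.
move=> vD vD'; apply/rowP => i; have := vD' i.
rewrite /same_orbit sum_porbit_Delta_pp // mxE => /eqP.
by rewrite mulf_eq0 (negPf (card_porbitR_neq0 i)) => /eqP.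
Qed.

Lemma is_proj_Delta_pp v w : is_proj (Delta_pp s) v w <-> w = orbit_mean v.
Proof.
split=> [[wD w_orth]|->]; last by split; [exact: orbit_mean_Delta_pp | exact: orbit_mean_orth].
set z := orbit_mean v - w.
have zD : Delta_pp s z by move=> i j ij; rewrite !mxE (porbit_mem_eq ij) (wD _ _ ij).
have : dotv ((v - w) - (v - orbit_mean v)) z = 0.
  by rewrite dotvBl w_orth // orbit_mean_orth // subrr.
rewrite opprB addrC addrA subrK => /dotvv_eq0 /eqP.
by rewrite subr_eq0 => /eqP.
Qed.

Section StableSubspace.
Variable E : set vec.
Hypothesis E_add : forall a b, E a -> E b -> E (a + b).
Hypothesis E_sub : forall a b, E a -> E b -> E (a - b).
Hypothesis E_mean : forall a, E a -> E (orbit_mean a).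

Lemma proj_set_Delta_pp : proj_set (Delta_pp s) E = E `&` Delta_pp s.
Proof.
apply/seteqP; split=> [w [v Ev /is_proj_Delta_pp ->]|w [Ew wD]].
  by split; [exact: E_mean | exact: orbit_mean_Delta_pp].
by exists w => //; apply/is_proj_Delta_pp; rewrite orbit_mean_id.
Qed.

Lemma direct_sum_Delta : direct_sum E (E `&` Delta_pp s) (E `&` Delta_p s).
Proof.
split=> [v|v [_ vD] [_ vD']]; last exact: Delta_pp_p_eq0.
split=> [Ev|[a [b [[Ea _] [Eb _] ->]]]]; last exact: E_add.
exists (orbit_mean v), (v - orbit_mean v); split; last by rewrite addrC subrK.
- by split; [exact: E_mean | exact: orbit_mean_Delta_pp].
- by split; [exact: E_sub (E_mean _) | exact: sub_orbit_mean_Delta_p].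
Qed.

End StableSubspace.

Lemma orthc_stable (T : set vec) :
  (forall a, T a -> T (orbit_mean a)) -> forall a, orthc T a -> orthc T (orbit_mean a).
Proof. by move=> T_mean a Na u Tu; rewrite dotv_orbit_mean; apply/Na/T_mean. Qed.

End OrbitMean.

Section OrbitAverage.
Variables (R : realType) (n : nat) (s : 'S_n).

Lemma card_porbit_dvd_order (i : 'I_n) : (#|porbit s i| %| #[s]%g)%N.
Proof. by rewrite porbit.unlock; exact: (dvdn_orbit 'P). Qed.

Lemma sum_traject (f : 'I_n -> R) c i :
  \sum_(j <- traject s i c) f j = \sum_(t < c) f ((s ^+ t)%g i).
Proof.
elim: c i => [|c IH] i; first by rewrite big_nil big_ord0.
rewrite trajectS big_cons big_ord_recl IH expg0 perm1; congr (_ + _).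
by apply: eq_bigr => t _; rewrite /= expgS permM.
Qed.

Lemma sum_iter_porbit (f : 'I_n -> R) i :
  \sum_(t < #|porbit s i|) f ((s ^+ t)%g i) = \sum_(j in porbit s i) f j.
Proof.
rewrite -sum_traject -big_enum /=; apply: perm_big.
apply: uniq_perm; [exact: uniq_traject_porbit | exact: enum_uniq |].
by move=> j; rewrite mem_enum porbit_traject.
Qed.

Lemma sum_iter_porbit_mul (f : 'I_n -> R) i q :
  \sum_(t < q * #|porbit s i|) f ((s ^+ t)%g i) = q%:R * \sum_(j in porbit s i) f j.
Proof.
set c := #|porbit s i|; rewrite -(big_mkord xpredT (fun t => f ((s ^+ t)%g i))).
elim: q => [|q IH]; first by rewrite mul0n big_geq // mul0r.
rewrite mulSnr (big_cat_nat (n := q * c)) ?leq_addr //= IH.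
have fix_qc : (s ^+ (q * c))%g i = i.
  by rewrite mulnC expgM permX iter_fix // permX iter_porbit.
rewrite -{1}[(q * c)%N]add0n big_addn addKn big_mkord.
rewrite (eq_bigr (fun t : 'I_c => f ((s ^+ t)%g i))) => [|t _]; last first.
  by rewrite addnC expgD permM fix_qc.
by rewrite sum_iter_porbit mulrSr mulrDl mul1r.
Qed.

Lemma orbit_mean_avg (v : 'rV[R]_n) :
  orbit_mean s v = #[s]%g%:R^-1 *: \sum_(t < #[s]%g) permv ((s ^+ t)^-1)%g v.
Proof.
apply/rowP => i; rewrite !mxE summxE.
rewrite (eq_bigr (fun t : 'I_#[s]%g => v ord0 ((s ^+ t)%g i))) => [|t _]; last first.
  by rewrite !mxE invgK.
rewrite -(divnK (card_porbit_dvd_order i)) sum_iter_porbit_mul natrM mulrA.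
have q_gt0 : (0 < #[s]%g %/ #|porbit s i|)%N.
  by rewrite divn_gt0 ?lt0n ?card_porbit_neq0 // dvdn_leq ?order_gt0 ?card_porbit_dvd_order.
by congr (_ * _); rewrite invfM mulrAC mulVf ?mul1r // pnatr_eq0 -lt0n.
Qed.

End OrbitAverage.

(** * Differential calculus on row vectors *)

Section MatrixNorm.
Variables (R : realType) (m p : nat).

Lemma normr_mx_entry (x : 'M[R]_(m, p)) i j : `|x i j| <= `|x|.
Proof.
change (`|x i j| <= mx_norm x); rewrite mx_normrE.
exact: (le_bigmax _ (fun ij : 'I_m * 'I_p => `|x ij.1 ij.2|) (i, j)).
Qed.

Lemma normr_mx_le (x : 'M[R]_(m, p)) c :
  0 <= c -> (forall i j, `|x i j| <= c) -> `|x| <= c.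
Proof.
move=> c0 xc; change (mx_norm x <= c); rewrite mx_normrE.
by apply/bigmax_leP; split => // -[i j] _; exact: xc.
Qed.

End MatrixNorm.

Section MeanValue.
Variables (R : realType) (n k : nat).
Notation V := 'rV[R]_n.
Notation W := 'rV[R]_k.

Lemma is_derive_line_entry (f : V -> W) (q d : V) (t0 : R) (j : 'I_k) :
  derivable f (q + t0 *: d) d ->
  is_derive t0 1 (fun t : R => f (q + t *: d) ord0 j) ('D_d f (q + t0 *: d) ord0 j).
Proof.
move=> df; set a := q + t0 *: d.
set Q := fun h : R => h^-1 *: ((f \o shift a) (h *: d) - f a).
have eQ : (fun h : R => h^-1 *: (((fun t => f (q + t *: d) ord0 j) \o shift t0)
    (h *: 1) - f (q + t0 *: d) ord0 j)) = (fun X : W => X ord0 j) \o Q.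
  by apply/funext => h /=; rewrite /Q /a /= !mxE [h *: 1]mulr1 scalerDl addrCA.
have cv : ((fun X : W => X ord0 j) \o Q) x @[x --> 0^'] --> ('D_d f a) ord0 j.
  exact: (continuous_cvg _ (@coord_continuous R 1 k ord0 j _) df).
apply: DeriveDef; first by rewrite /derivable eQ; apply/cvg_ex; eexists; exact: cv.
by rewrite /derive eQ; exact: cvg_lim.
Qed.

Lemma mean_value_ineq (g : V -> W) (q d : V) (M : R) :
  (forall t : R, 0 <= t -> t <= 1 -> differentiable g (q + t *: d)) ->
  (forall t : R, 0 <= t -> t <= 1 -> `|'D_d g (q + t *: d)| <= M) ->
  `|g (q + d) - g q| <= M.
Proof.
move=> dg gM; have M0 : 0 <= M := le_trans (normr_ge0 _) (gM 0 (lexx _) ler01).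
apply: normr_mx_le => // i j; rewrite (ord1 i).
pose psi (t : R) : R := g (q + t *: d) ord0 j.
have psi' (t : R) : 0 <= t -> t <= 1 -> is_derive t 1 psi ('D_d g (q + t *: d) ord0 j).
  by move=> t0 t1; apply/is_derive_line_entry/diff_derivable/dg.
have psi_cont : {within `[0, 1], continuous psi}.
  apply: derivable_within_continuous => t; rewrite in_itv /= => /andP[t0 t1].
  by have [] := psi' t t0 t1.
have psi'_open (t : R) : t \in `]0, 1[%R -> is_derive t 1 psi ('D_d g (q + t *: d) ord0 j).
  by rewrite in_itv /= => /andP[t0 t1]; exact: psi' (ltW t0) (ltW t1).
have [c] := MVT ltr01 psi'_open psi_cont; rewrite in_itv /= => /andP[c0 c1] psiE.
have -> : (g (q + d) - g q) 0 j = psi 1 - psi 0.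
  by rewrite /psi scale1r scale0r addr0 !mxE.
rewrite psiE subr0 mulr1.
exact: le_trans (normr_mx_entry _ _ _) (gM c (ltW c0) (ltW c1)).
Qed.

End MeanValue.

Lemma normr_convex_lt (R : realFieldType) (E : normedModType R) (h1 h2 : E) r t :
  `|h1| < r -> `|h2| < r -> 0 <= t -> t <= 1 -> `|h2 + t *: (h1 - h2)| < r.
Proof.
move=> h1r h2r t0 t1.
have -> : h2 + t *: (h1 - h2) = (1 - t) *: h2 + t *: h1.
  by rewrite scalerBr scalerBl scale1r [RHS]addrC addrCA.
apply: le_lt_trans (ler_normD _ _) _; rewrite !normrZ (ger0_norm t0) ger0_norm ?subr_ge0 //.
set m := Num.max `|h1| `|h2|.
apply: (@le_lt_trans _ _ ((1 - t) * m + t * m)); last first.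
  by rewrite -mulrDl subrK mul1r /m gt_max h1r.
by apply: lerD; apply: ler_wpM2l; rewrite ?subr_ge0 // le_max lexx ?orbT.
Qed.

Lemma linear_row_sum (R : nzRingType) (m p : nat) (L : {linear 'rV[R]_m -> 'rV[R]_p})
  (d : 'rV[R]_m) : L d = \sum_(i < m) d 0 i *: L 'e_i.
Proof.
by rewrite {1}(row_sum_delta d) linear_sum; apply: eq_bigr => i _; rewrite linearZ.
Qed.

Section StrictDifferentiability.
Variables (R : realType) (n k : nat).
Notation V := 'rV[R]_n.
Notation W := 'rV[R]_k.
Variables (f : V -> W) (x : V) (U : set V).
Hypothesis U_open : open U.
Hypothesis Ux : U x.
Hypothesis f_diff : forall y, U y -> differentiable f y.
Hypothesis f_derive_cont : forall v, {for x, continuous (fun y => 'D_v f y)}.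

Lemma derive_near_differential e : 0 < e -> exists2 r, 0 < r &
  forall h, `|h| < r -> U (x + h) /\ forall d : V, `|'D_d f (x + h) - 'd f x d| <= e * `|d|.
Proof.
move=> e0; pose e' := e / (n%:R + 1).
have e'0 : 0 < e' by rewrite divr_gt0 // ltr_wpDl.
have ne' : n%:R * e' <= e.
  by rewrite /e' mulrA ler_pdivrMr ?ltr_wpDl // mulrDr mulr1 mulrC lerDl ltW.
have near_x : \forall y \near x, U y /\ forall i : 'I_n, `|'D_('e_i) f x - 'D_('e_i) f y| < e'.
  have partials_near : \forall y \near x,
      forall i : 'I_n, `|'D_('e_i) f x - 'D_('e_i) f y| < e'.
    apply: (@filter_forall _ _ (fun i y => `|'D_('e_i) f x - 'D_('e_i) f y| < e')
      (nbhs x) (nbhs_filter x)).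
    by move=> i; exact: (cvgrPdist_lt _ _).1 (@f_derive_cont 'e_i) _ e'0.
  have U_near : \forall y \near x, U y := open_nbhs_nbhs (conj U_open Ux).
  by near=> y; split; near: y.
have [r r0 hr] := (nbhs_ballP _ _).1 near_x.
exists r => // h hr_h.
have [Uxh partials] : U (x + h) /\ forall i : 'I_n,
    `|'D_('e_i) f x - 'D_('e_i) f (x + h)| < e'.
  by apply: hr; rewrite -ball_normE /= opprD addrA subrr sub0r normrN.
split=> // d.
have -> : 'D_d f (x + h) - 'd f x d = \sum_(i < n) d 0 i *: ('D_('e_i) f (x + h) - 'D_('e_i) f x).
  have Dx v : 'D_v f x = 'd f x v by rewrite deriveE //; exact: f_diff.
  have Dxh v : 'D_v f (x + h) = 'd f (x + h) v by rewrite deriveE //; exact: f_diff.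
  rewrite Dxh; transitivity (\sum_(i < n) d 0 i *: 'd f (x + h) 'e_i -
                             \sum_(i < n) d 0 i *: 'd f x 'e_i).
    by congr (_ - _); exact: linear_row_sum.
  by rewrite -sumrB; apply: eq_bigr => i _; rewrite Dxh Dx scalerBr.
apply: le_trans (ler_norm_sum _ _ _) _.
apply: (@le_trans _ _ (\sum_(i < n) `|d| * e')).
  apply: ler_sum => i _; rewrite normrZ ler_pM ?normr_mx_entry // distrC ltW //.
by rewrite sumr_const card_ord -mulr_natl mulrCA mulrC ler_wpM2r.
Unshelve. all: end_near.
Qed.

Lemma strict_differentiable e : 0 < e -> exists2 r, 0 < r & forall h1 h2 : V,
  `|h1| < r -> `|h2| < r -> `|f (x + h1) - f (x + h2) - 'd f x (h1 - h2)| <= e * `|h1 - h2|.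
Proof.
move=> e0; have [r r0 hr] := derive_near_differential e0.
exists r => // h1 h2 h1r h2r; set L := 'd f x.
have L_cont : continuous L := diff_continuous (f_diff Ux).
pose g y := f y - L y.
have -> : f (x + h1) - f (x + h2) - L (h1 - h2) = g (x + h2 + (h1 - h2)) - g (x + h2).
  have xh : x + h2 + (h1 - h2) = x + h1 by rewrite -addrA (addrC h2) subrK.
  have Lh : L (x + h1) - L (x + h2) = L (h1 - h2).
    by rewrite -linearB opprD addrACA subrr add0r.
  by rewrite /g xh -Lh !opprD !opprK addrACA.
apply: (@mean_value_ineq R n k g (x + h2) (h1 - h2)) => t t0 t1;
  have [Up fp] := hr _ (normr_convex_lt h1r h2r t0 t1).
  by rewrite -addrA; exact: differentiableB (f_diff Up) (linear_differentiable _ L_cont).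
rewrite -addrA; set p := x + _ in Up fp *.
have dL : differentiable L p := linear_differentiable p L_cont.
have -> : 'D_(h1 - h2) g p = 'D_(h1 - h2) f p - 'D_(h1 - h2) L p.
  exact: deriveB (diff_derivable (f_diff Up)) (diff_derivable dL).
by rewrite (deriveE _ dL) diff_lin //; exact: fp.
Qed.
End StrictDifferentiability.

(** * The zero set of a submersion *)

Lemma near_identity_has_zero (R : realType) (X : completeNormedModType R)
    (g : X -> X) (rho : R) : 0 < rho ->
  (forall c1 c2, `|c1| <= rho -> `|c2| <= rho ->
     `|(c1 - c2) - (g c1 - g c2)| <= 2^-1 * `|c1 - c2|) ->
  `|g 0| <= rho / 2 -> exists2 c, `|c| <= rho & g c = 0.
Proof.
move=> rho0 g_lip g0.
pose B := closed_ball (0 : X) rho.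
have BE c : B c <-> `|c| <= rho.
  by rewrite /B closed_ballE //= /closed_ball_ /= sub0r normrN.
pose phi c := c - g c.
have phi_lip c1 c2 : `|c1| <= rho -> `|c2| <= rho ->
    `|phi c1 - phi c2| <= 2^-1 * `|c1 - c2|.
  have -> : phi c1 - phi c2 = (c1 - c2) - (g c1 - g c2).
    by rewrite /phi !opprD !opprK addrACA.
  exact: g_lip.
have phiB : {homo phi : c / B c >-> B c}.
  move=> c /BE c_rho; apply/BE; rewrite -(subrK (phi 0) (phi c)).
  have := phi_lip c 0 c_rho; rewrite normr0 subr0 ltW // => /(_ isT) c_lip.
  have phi0 : `|phi 0| <= rho / 2 by rewrite /phi sub0r normrN.
  by apply: le_trans (ler_normD _ _) _; apply: le_trans (lerD c_lip phi0) _; lra.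
have [c Bc /esym phic] : exists2 c, B c & c = phi c.
  apply: (@banach_fixed_point _ _ _ (mkfun phiB)); last by exists 0; apply/BE; rewrite normr0 ltW.
  - exists (2^-1)%:nng; split => /=; first by rewrite invf_lt1 // ltr1n.
    by move=> [c1 c2] [/= /BE c1B /BE c2B]; exact: phi_lip.
  - exact: closed_ball_closed.
by exists c; [exact/BE | apply/oppr_inj/(addrI c); rewrite oppr0 addr0].
Qed.

Section RightInverse.
Variables (R : realType) (n k : nat).

Lemma linear_surj_right_inverse (L : {linear 'rV[R]_n -> 'rV[R]_k}) :
  (forall w, exists v, L v = w) -> exists B : 'M[R]_(k, n), forall c, L (c *m B) = c.
Proof.
move=> L_surj; have /choice [a La] : forall j : 'I_k, exists v, L v = 'e_j.
  by move=> j; exact: L_surj.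
exists (\matrix_j a j) => c; rewrite mulmx_sum_row linear_sum [RHS]row_sum_delta.
by apply: eq_bigr => j _; rewrite linearZ rowK La.
Qed.

Lemma mulmx_lipschitz (B : 'M[R]_(k, n)) :
  exists2 K, 0 < K & forall c : 'rV[R]_k, `|c *m B| <= K * `|c|.
Proof.
exists (\sum_j `|row j B| + 1) => [|c]; first by rewrite ltr_wpDl // sumr_ge0.
rewrite mulmx_sum_row; apply: le_trans (ler_norm_sum _ _ _) _.
apply: (@le_trans _ _ (\sum_j `|c| * `|row j B|)).
  by apply: ler_sum => j _; rewrite normrZ ler_wpM2r // normr_mx_entry.
by rewrite -mulr_sumr mulrC ler_wpM2r // lerDl.
Qed.

End RightInverse.

(* Completeness of matrices is only declared over complete uniform types; this instance
   exposes it on the normed module 'M[R]_(m, p), as the Banach fixed point theorem needs. *)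
HB.instance Definition _ (R : realType) (m p : nat) :=
  Uniform_isComplete.Build 'M[R]_(m, p) (@mx_complete R m p).

Section ZeroSet.
Variables (R : realType) (n k : nat).
Notation V := 'rV[R]_n.
Notation W := 'rV[R]_k.

(* A Newton step: [c |-> f (x + p + c B)] differs from the identity by a contraction,
   because ['d f x (c B) = c]. *)
Lemma zero_on_affine_slice (f : V -> W) (x p : V) (B : 'M[R]_(k, n)) (K eps del rho : R) :
  (forall c : W, 'd f x (c *m B) = c) -> (forall c : W, `|c *m B| <= K * `|c|) ->
  0 <= K -> 0 < eps -> eps * K <= 2^-1 ->
  (forall h1 h2 : V, `|h1| < del -> `|h2| < del ->
     `|f (x + h1) - f (x + h2) - 'd f x (h1 - h2)| <= eps * `|h1 - h2|) ->
  0 < rho -> `|p| + K * rho < del -> `|f (x + p)| <= rho / 2 ->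
  exists2 c, `|c| <= rho & f (x + (p + c *m B)) = 0.
Proof.
move=> LB BK K0 eps0 epsK f_strict rho0 p_del fp.
pose h (c : W) := p + c *m B.
have hB c1 c2 : h c1 - h c2 = (c1 - c2) *m B.
  by rewrite /h opprD addrACA subrr add0r mulmxBl.
have h_small c : `|c| <= rho -> `|h c| < del.
  move=> c_rho; apply: le_lt_trans (ler_normD _ _) _; apply: le_lt_trans p_del.
  by rewrite lerD2l; apply: le_trans (BK c) _; rewrite ler_wpM2l.
apply: (near_identity_has_zero (g := fun c => f (x + h c)) rho0); last first.
  by rewrite /h mul0mx addr0.
move=> c1 c2 c1r c2r.
have -> : (c1 - c2) - (f (x + h c1) - f (x + h c2)) =
    - (f (x + h c1) - f (x + h c2) - 'd f x (h c1 - h c2)).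
  by rewrite hB LB [RHS]opprB.
rewrite normrN; apply: le_trans (f_strict _ _ (h_small _ c1r) (h_small _ c2r)) _.
rewrite hB; apply: le_trans (ler_wpM2l (ltW eps0) (BK _)) _.
by rewrite mulrA ler_wpM2r.
Qed.

Variables (f : V -> W) (x : V) (U : set V).
Hypothesis U_open : open U.
Hypothesis Ux : U x.
Hypothesis f_diff : forall y, U y -> differentiable f y.
Hypothesis f_derive_cont : forall v, {for x, continuous (fun y => 'D_v f y)}.
Hypothesis df_surj : forall w, exists v, 'd f x v = w.
Hypothesis fx0 : f x = 0.

Lemma kernel_zero_set_approx v : 'd f x v = 0 -> forall eta del : R, 0 < eta -> 0 < del ->
  exists t h, [/\ 0 < t, `|h| < del, f (x + h) = 0 & `|h - t *: v| <= t * eta].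
Proof.
move=> Lv eta del eta0 del0.
have [B LB] := linear_surj_right_inverse df_surj.
have [K K0 BK] := mulmx_lipschitz B.
pose eps := Num.min (2^-1 / K) (eta / (2 * K) / (`|v| + 1)).
have v1 : 0 < `|v| + 1 by rewrite ltr_wpDl.
have eps0 : 0 < eps by rewrite lt_min !divr_gt0 // mulr_gt0.
have epsK : eps * K <= 2^-1 by rewrite -ler_pdivlMr // ge_min lexx.
have epsv : eps * `|v| <= eta / (2 * K).
  apply: (@le_trans _ _ (eps * (`|v| + 1))); first by rewrite ler_wpM2l ?lerDl // ltW.
  by rewrite -ler_pdivlMr // ge_min lexx orbT.
have [d d0 f_strict] := strict_differentiable U_open Ux f_diff f_derive_cont eps0.
pose del' := Num.min d del.
have del'0 : 0 < del' by rewrite lt_min d0 del0.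
have del'd : del' <= d by rewrite ge_min lexx.
pose t := del' / (`|v| + eta + 1).
have a1 : 0 < `|v| + eta + 1 by rewrite ltr_wpDl // addr_ge0 // ltW.
have t0 : 0 < t by rewrite divr_gt0.
pose rho := eta * t / K.
have rho0 : 0 < rho by rewrite !mulr_gt0 // invr_gt0.
have K_rho : K * rho = eta * t by rewrite mulrC divfK // gt_eqF.
have tv_del' : `|t *: v| + K * rho < del'.
  rewrite normrZ gtr0_norm // K_rho [eta * t]mulrC -mulrDr /t mulrAC.
  by rewrite ltr_pdivrMr // ltr_pM2l // ltrDl.
have tv_d : `|t *: v| < d.
  apply: lt_le_trans del'd; apply: le_lt_trans tv_del'.
  by rewrite lerDl mulr_ge0 // ltW.
have f_tv : `|f (x + t *: v)| <= rho / 2.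
  have := f_strict (t *: v) 0 tv_d; rewrite normr0 => /(_ d0).
  rewrite addr0 fx0 !subr0 linearZ /= Lv scaler0 subr0 => /le_trans; apply.
  rewrite normrZ gtr0_norm // mulrCA; apply: le_trans (ler_wpM2l (ltW t0) epsv) _.
  suff -> : rho / 2 = t * (eta / (2 * K)) by [].
  by rewrite /rho; field; rewrite gt_eqF.
have [c c_rho fc] := zero_on_affine_slice LB BK (ltW K0) eps0 epsK
  (fun h1 h2 h1d h2d => f_strict _ _ (lt_le_trans h1d del'd) (lt_le_trans h2d del'd))
  rho0 tv_del' f_tv.
exists t, (t *: v + c *m B); split => //.
- have del'del : del' <= del by rewrite ge_min lexx orbT.
  apply: lt_le_trans del'del; apply: le_lt_trans (ler_normD _ _) (le_lt_trans _ tv_del').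
  by rewrite lerD2l; apply: le_trans (BK c) _; rewrite ler_wpM2l // ltW.
- rewrite addrAC subrr add0r mulrC -K_rho; apply: le_trans (BK c) _.
  by rewrite ler_wpM2l // ltW.
Qed.

(* Approximate [t v] by a zero [h] of [f]; then [G h] is a zero too, so ['d f x (G h)] is
   small compared to [h], and so is ['d f x (G (t v))]. *)
Lemma kernel_stable (G : V -> V) (r : R) :
  (forall a b, G (a - b) = G a - G b) -> (forall (c : R) a, G (c *: a) = c *: G a) ->
  (forall h, `|G h| <= `|h|) -> 0 < r ->
  (forall h, `|h| < r -> f (x + h) = 0 -> f (x + G h) = 0) ->
  forall v, 'd f x v = 0 -> 'd f x (G v) = 0.
Proof.
move=> GB GZ G_norm r0 G_zero v Lv; set L := 'd f x.
have [KL KL0 L_lip] := linear_lipschitz (diff_continuous (f_diff Ux)).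
apply/eqP; rewrite -normr_le0; apply/ler_addgt0Pr => eta eta0; rewrite add0r.
have c0 : 0 < `|v| + 1 + KL by rewrite addr_gt0 // ltr_wpDl.
pose eps := Num.min 1 (eta / (`|v| + 1 + KL)).
have eps0 : 0 < eps by rewrite lt_min ltr01 divr_gt0.
have eps1 : eps <= 1 by rewrite ge_min lexx.
have eps_eta : eps * (`|v| + 1 + KL) <= eta by rewrite -ler_pdivlMr // ge_min lexx orbT.
have [d d0 f_strict] := strict_differentiable U_open Ux f_diff f_derive_cont eps0.
have dr0 : 0 < Num.min d r by rewrite lt_min d0 r0.
have [t [h [t0 h_small fh h_tv]]] := kernel_zero_set_approx Lv eps0 dr0.
have [h_d h_r] : `|h| < d /\ `|h| < r by move: h_small; rewrite lt_min => /andP[].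
have LGh : `|L (G h)| <= eps * (t * (`|v| + 1)).
  have := f_strict (G h) 0 (le_lt_trans (G_norm h) h_d); rewrite normr0 => /(_ d0).
  rewrite addr0 fx0 G_zero // !subr0 sub0r normrN => /le_trans; apply.
  apply: ler_wpM2l; first exact: ltW.
  apply: le_trans (G_norm h) _; rewrite -(subrK (t *: v) h).
  apply: le_trans (ler_normD _ _) _; rewrite normrZ gtr0_norm // addrC mulrDr mulr1.
  by rewrite lerD2l; apply: le_trans h_tv _; rewrite ler_piMr // ltW.
have LGd : `|L (G (t *: v)) - L (G h)| <= KL * (t * eps).
  rewrite -linearB -GB; apply: le_trans (L_lip _) _; apply: ler_wpM2l; first exact: ltW.
  by apply: le_trans (G_norm _) _; rewrite distrC.
rewrite -(ler_pM2l t0); have -> : t * `|L (G v)| = `|L (G (t *: v))|.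
  by rewrite GZ linearZ normrZ gtr0_norm.
rewrite -(subrK (L (G h)) (L (G (t *: v)))); apply: le_trans (ler_normD _ _) _.
apply: le_trans (lerD LGd LGh) _.
have -> : KL * (t * eps) + eps * (t * (`|v| + 1)) = t * (eps * (`|v| + 1 + KL)) by ring.
by rewrite ler_wpM2l // ltW.
Qed.

End ZeroSet.

(** * Local symmetry *)

Section Permutations.
Variables (R : realType) (n : nat).
Notation V := 'rV[R]_n.

Lemma permvD (g : 'S_n) (a b : V) : permv g (a + b) = permv g a + permv g b.
Proof. by apply/rowP => i; rewrite !mxE. Qed.

Lemma permvB (g : 'S_n) (a b : V) : permv g (a - b) = permv g a - permv g b.
Proof. by apply/rowP => i; rewrite !mxE. Qed.

Lemma permvZ (g : 'S_n) (c : R) (a : V) : permv g (c *: a) = c *: permv g a.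
Proof. by apply/rowP => i; rewrite !mxE. Qed.

Lemma normr_permv_le (g : 'S_n) (a : V) : `|permv g a| <= `|a|.
Proof. by apply: normr_mx_le => // i j; rewrite mxE; exact: normr_mx_entry. Qed.

Lemma Delta_pp_permv_cycle (s : 'S_n) (x : V) t :
  Delta_pp s x -> permv ((s ^+ t)^-1)%g x = x.
Proof. by move=> xD; apply/rowP => i; rewrite mxE invgK -(xD _ _ (mem_porbit s t i)). Qed.

Lemma dotvv_le (h : V) : dotv h h <= n%:R * `|h| ^+ 2.
Proof.
rewrite /dotv; apply: (@le_trans _ _ (\sum_(i < n) `|h| ^+ 2)).
  apply: ler_sum => i _.
  by rewrite -expr2 -real_normK ?num_real // lerXn2r ?nnegrE // normr_mx_entry.
by rewrite sumr_const card_ord mulr_natl.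
Qed.

Lemma eball_normr (x h : V) (d : R) : 0 < d -> `|h| < d / (n%:R + 1) -> eball x d (x + h).
Proof.
move=> d0 hd; rewrite /eball /= addrC addKr; apply: le_lt_trans (dotvv_le h) _.
have n1 : 0 < n%:R + 1 :> R by rewrite ltr_wpDl.
have hd' : (n%:R + 1) * `|h| < d by rewrite mulrC -ltr_pdivlMr.
have hn0 : 0 <= (n%:R + 1) * `|h| by rewrite mulr_ge0 // ltW.
apply: (@le_lt_trans _ _ (((n%:R + 1) * `|h|) ^+ 2)); last by rewrite !expr2; apply: ltr_pM.
rewrite exprMn ler_wpM2r ?exprn_ge0 //.
have n0 : 0 <= n%:R :> R by [].
by rewrite expr2; nra.
Qed.

Lemma zero_set_permv_stable (M U : set V) (k : nat) (F : V -> 'rV[R]_k) (x : V) (g : 'S_n) :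
  locally_symmetric M -> M x -> open U -> U x ->
  M `&` U = [set y | U y /\ F y = 0] -> permv g x = x ->
  exists2 r, 0 < r & forall h, `|h| < r -> F (x + h) = 0 -> F (x + permv g h) = 0.
Proof.
move=> [_ M_sym] Mx U_open Ux MU gx; have [d d0 M_ball] := M_sym x Mx.
have [rU rU0 ballU] := (nbhs_ballP _ _).1 (open_nbhs_nbhs (conj U_open Ux)).
have U_near z : `|z| < rU -> U (x + z).
  by move=> zr; apply: ballU; rewrite -ball_normE /= opprD addrA subrr sub0r normrN.
have zero_M z : `|z| < rU -> F (x + z) = 0 -> M (x + z).
  move=> zr Fz; have : [set y | U y /\ F y = 0] (x + z) by split => //; exact: U_near.
  by rewrite -MU => -[].
exists (Num.min rU (d / (n%:R + 1))) => [|h]; first by rewrite lt_min rU0 divr_gt0 // ltr_wpDl.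
rewrite lt_min => /andP[h_rU h_d] Fh.
have Mx_ball : (M `&` eball x d) x by split=> //; rewrite /eball /= subrr dotv0r exprn_gt0.
have : (M `&` eball x d) (permv g (x + h)).
  rewrite -(M_ball x g Mx_ball gx); exists (x + h) => //.
  by split; [exact: zero_M | exact: eball_normr].
rewrite permvD gx => -[M_xgh _].
have : (M `&` U) (x + permv g h).
  by split=> //; apply: U_near; exact: le_lt_trans (normr_permv_le g h) h_rU.
by rewrite MU => -[].
Qed.

End Permutations.

Section TangentSpace.
Variables (R : realType) (n k : nat).
Notation V := 'rV[R]_n.
Variables (M U : set V) (F : V -> 'rV[R]_k) (x : V).

Lemma tangent_ofD a b : tangent_of F x a -> tangent_of F x b -> tangent_of F x (a + b).
Proof. by rewrite /tangent_of /= linearD => -> ->; rewrite addr0. Qed.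

Lemma tangent_ofB a b : tangent_of F x a -> tangent_of F x b -> tangent_of F x (a - b).
Proof. by rewrite /tangent_of /= linearB => -> ->; rewrite subr0. Qed.

Hypothesis M_sym : locally_symmetric M.
Hypothesis Mx : M x.
Hypothesis F_def : local_defining_map M x U F.

Lemma tangent_permv (g : 'S_n) : permv g x = x ->
  forall v, tangent_of F x v -> tangent_of F x (permv g v).
Proof.
move: F_def => [Ux [U_open [F_diff [dF_diff _]]] dF_surj MU] gx.
have Fx0 : F x = 0 by have : (M `&` U) x by []; rewrite MU => -[].
have dF_cont v : {for x, continuous (fun y => 'D_v F y)}.
  exact: differentiable_continuous (dF_diff v x Ux).
have [r r0 F_sym] := zero_set_permv_stable M_sym Mx U_open Ux MU gx.
move=> v Tv; exact: (kernel_stable U_open Ux F_diff dF_cont dF_surj Fx0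
  (permvB _) (permvZ _) (normr_permv_le _) r0 F_sym Tv).
Qed.

Lemma tangent_orbit_mean (s : 'S_n) : Delta_pp s x ->
  forall v, tangent_of F x v -> tangent_of F x (orbit_mean s v).
Proof.
move=> xD v Tv; rewrite /tangent_of /= orbit_mean_avg linearZZ linear_sum.
rewrite big1 ?scaler0 // => t _.
exact: tangent_permv (Delta_pp_permv_cycle t xD) _ Tv.
Qed.

End TangentSpace.

Lemma orthcD (R : realType) (n : nat) (A : set 'rV[R]_n) a b :
  orthc A a -> orthc A b -> orthc A (a + b).
Proof. by move=> Aa Ab u Au; rewrite dotvDl Aa ?Ab ?addr0. Qed.

Lemma orthcB (R : realType) (n : nat) (A : set 'rV[R]_n) a b :
  orthc A a -> orthc A b -> orthc A (a - b).
Proof. by move=> Aa Ab u Au; rewrite dotvBl Aa ?Ab ?subr0. Qed.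

Unset Implicit Arguments.
Theorem proposition3p15 (R : realType) (n : nat) (M : set 'rV[R]_n)
  (s : 'S_n) (xbar : 'rV[R]_n) (k : nat) (U : set 'rV[R]_n)
  (F : 'rV[R]_n -> 'rV[R]_k) :
  locally_symmetric_C2_submanifold M ->
  M xbar -> Delta s xbar ->
  local_defining_map M xbar U F ->
  let T := tangent_of F xbar in
  let N := orthc T in
  [/\ proj_set (Delta_pp s) T = T `&` Delta_pp s,
      direct_sum T (T `&` Delta_pp s) (T `&` Delta_p s) &
      direct_sum N (N `&` Delta_pp s) (N `&` Delta_p s)].
Proof.
move=> [_ _ M_sym] Mx xD F_def T N.
have xD' : Delta_pp s xbar by move=> i j; rewrite -(xD i j) => /eqP.
have T_mean := tangent_orbit_mean M_sym Mx F_def xD'.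
split.
- exact: proj_set_Delta_pp T_mean.
- exact: direct_sum_Delta (tangent_ofD (F := F) (x := xbar))
    (tangent_ofB (F := F) (x := xbar)) T_mean.
- exact: direct_sum_Delta (orthcD (A := T)) (orthcB (A := T)) (orthc_stable T_mean).
Qed.
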